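(* If the extended Markov monoid of a probabilistic automaton $\mathcal{A}$ contains a leak witness, then the Markov monoid of $\mathcal{A}$ contains a non-simplicity witness.
   Context: Fix a finite alphabet $A$ and a probabilistic automaton $\mathcal{A}=(Q,q_0,\Delta,F)$, $\Delta:Q\times A\to\mathcal{D}(Q)$. A limit-word is a map $\mathbf{u}:Q\times Q\to\{0,1\}$ such that every $s$ has some $t$ with $\mathbf{u}(s,t)=1$. Concatenation: $(\mathbf{u}\cdot\mathbf{v})(s,t)=1$ iff there is $q$ with $\mathbf{u}(s,q)=\mathbf{v}(q,t)=1$ (written $\mathbf{u}\mathbf{v}$). $\mathbf{u}$ is idempotent if $\mathbf{u}\mathbf{u}=\mathbf{u}$; for idempotent $\mathbf{u}$, $s$ is $\mathbf{u}$-recurrent if for all $t$, $\mathbf{u}(s,t)=1\Rightarrow\mathbf{u}(t,s)=1$, and $\mathbf{u}$-transient otherwise; $\mathbf{u}^\sharp(s,t)=1$ iff $\mathbf{u}(s,t)=1$ and $t$ is $\mathbf{u}$-recurrent. For $a\in A$, $\mathbf{a}(s,t)=1$ iff $\Delta(s,a)(t)>0$; $\mathbf{1}$ is the identity. The Markov monoid of $\mathcal{A}$ is the smallest set of limit-words containing $\{\mathbf{a}\mid a\in A\}\cup\{\mathbf{1}\}$ and closed under concatenation and iteration of idempotents. An extended limit-word is a pair $(\mathbf{u},\mathbf{u}_+)$ of limit-words with $\mathbf{u}\le\mathbf{u}_+$ pointwise; concatenation is componentwise, $(\mathbf{u},\mathbf{u}_+)$ is idempotent if both components are, and then $(\mathbf{u},\mathbf{u}_+)^\sharp=(\mathbf{u}^\sharp,\mathbf{u}_+)$.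 The extended Markov monoid is the smallest set of extended limit-words containing $\{(\mathbf{a},\mathbf{a})\mid a\in A\}\cup\{(\mathbf{1},\mathbf{1})\}$ and closed under concatenation and iteration of idempotents. A leak witness is an idempotent extended limit-word $(\mathbf{u},\mathbf{u}_+)$ with states $r,q$ both $\mathbf{u}$-recurrent such that $\mathbf{u}(r,q)=0$ and $\mathbf{u}_+(r,q)=1$. A non-simplicity witness is a triple $(\mathbf{u},\mathbf{v},\mathbf{w})$ of elements of the Markov monoid, with $\mathbf{v}$ idempotent, for which there exist states $r,t$ such that: $\mathbf{u}\mathbf{v}^\sharp\mathbf{w}$ is idempotent, $r$ is $\mathbf{u}\mathbf{v}^\sharp\mathbf{w}$-recurrent, $(\mathbf{u}\mathbf{v})(r,t)=1$, and $t$ is $\mathbf{v}$-transient. *)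

From HB Require Import structures.
From mathcomp Require Import all_boot all_order all_algebra.
From mathcomp Require Import reals.
Set Implicit Arguments. Unset Strict Implicit. Unset Printing Implicit Defensive.
Import Order.TTheory GRing.Theory Num.Theory.
Local Open Scope ring_scope.

(* A probabilistic automaton (Q, q0, Delta, F): Delta s a is a probability
   distribution on Q, given by its mass function Delta s a : Q -> R. *)
Definition is_transition (R : realType) (Q A : finType) (Delta : Q -> A -> Q -> R) : Prop :=
  forall (s : Q) (a : A), (forall t, 0 <= Delta s a t) /\ \sum_(t : Q) Delta s a t = 1.

Definition lword (Q : finType) := {ffun Q * Q -> bool}.

Definition is_limit_word (Q : finType) (u : lword Q) : Prop :=
  forall s, exists t, u (s, t).

Definition lw_mul (Q : finType) (u v : lword Q) : lword Q :=
  [ffun p : Q * Q => [exists q, u (p.1, q) && v (q, p.2)]].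

Definition lw_one (Q : finType) : lword Q := [ffun p : Q * Q => p.1 == p.2].

Definition lw_idem (Q : finType) (u : lword Q) : bool := lw_mul u u == u.

Definition lw_recurrent (Q : finType) (u : lword Q) (s : Q) : bool :=
  [forall t, u (s, t) ==> u (t, s)].

Definition lw_sharp (Q : finType) (u : lword Q) : lword Q :=
  [ffun p : Q * Q => u p && lw_recurrent u p.2].

Definition lw_letter (R : realType) (Q A : finType) (Delta : Q -> A -> Q -> R) (a : A)
  : lword Q := [ffun p : Q * Q => 0 < Delta p.1 a p.2].

Inductive markov_monoid (R : realType) (Q A : finType) (Delta : Q -> A -> Q -> R)
  : lword Q -> Prop :=
| mm_letter (a : A) : markov_monoid Delta (lw_letter Delta a)
| mm_one : markov_monoid Delta (@lw_one Q)
| mm_mul (u v : lword Q) :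
    markov_monoid Delta u -> markov_monoid Delta v -> markov_monoid Delta (lw_mul u v)
| mm_sharp (u : lword Q) :
    markov_monoid Delta u -> lw_idem u -> markov_monoid Delta (lw_sharp u).

Inductive ext_markov_monoid (R : realType) (Q A : finType) (Delta : Q -> A -> Q -> R)
  : lword Q -> lword Q -> Prop :=
| emm_letter (a : A) : ext_markov_monoid Delta (lw_letter Delta a) (lw_letter Delta a)
| emm_one : ext_markov_monoid Delta (@lw_one Q) (@lw_one Q)
| emm_mul (u up v vp : lword Q) :
    ext_markov_monoid Delta u up -> ext_markov_monoid Delta v vp ->
    ext_markov_monoid Delta (lw_mul u v) (lw_mul up vp)
| emm_sharp (u up : lword Q) :
    ext_markov_monoid Delta u up -> lw_idem u -> lw_idem up ->
    ext_markov_monoid Delta (lw_sharp u) up.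

Definition leak_witness (Q : finType) (u up : lword Q) : Prop :=
  lw_idem u /\ lw_idem up /\
  exists r q : Q, [/\ lw_recurrent u r, lw_recurrent u q, u (r, q) = false & up (r, q) = true].

Definition non_simplicity_witness (Q : finType) (u v w : lword Q) : Prop :=
  lw_idem v /\
  exists r t : Q,
    let x := lw_mul (lw_mul u (lw_sharp v)) w in
    [/\ lw_idem x, lw_recurrent x r, lw_mul u v (r, t) = true & ~~ lw_recurrent v t].

From HB Require Import structures.
From mathcomp Require Import all_boot all_order all_algebra.
From mathcomp Require Import reals.

Set Implicit Arguments.
Unset Strict Implicit.
Unset Printing Implicit Defensive.

(* A pair (u, u_+) of the extended Markov monoid differs only where some
   iteration v^# erased an edge into a v-transient state; u_+ remembers the
   edge, u does not.  Following the derivation of (u, u_+) down to that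
   iteration factors u as x v^# y with x v reaching a v-transient state from
   the source of the missing edge.  For a leak witness this source r is
   u-recurrent and u is idempotent, so (x, v, y) is a non-simplicity witness. *)

Section LimitWordAlgebra.
Variable Q : finType.

Lemma lw_mulE (u v : lword Q) a b :
  lw_mul u v (a, b) = [exists q, u (a, q) && v (q, b)].
Proof. by rewrite ffunE. Qed.

Lemma lw_mulA (u v w : lword Q) : lw_mul (lw_mul u v) w = lw_mul u (lw_mul v w).
Proof.
apply/ffunP=> [[a b]]; rewrite !lw_mulE.
apply/fintype.existsP/fintype.existsP=> [[c /andP[]]|[c /andP[uac]]].
- rewrite lw_mulE => /fintype.existsP[d /andP[uad vdc]] wcb.
  by exists d; rewrite uad lw_mulE; apply/fintype.existsP; exists c; rewrite vdc.
- rewrite lw_mulE => /fintype.existsP[d /andP[vcd wdb]].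
  by exists d; rewrite wdb andbT lw_mulE; apply/fintype.existsP; exists c; rewrite uac.
Qed.

Lemma lw_mul1l (u : lword Q) : lw_mul (@lw_one Q) u = u.
Proof.
apply/ffunP=> [[a b]]; rewrite lw_mulE.
apply/fintype.existsP/idP=> [[c /andP[]]|uab]; first by rewrite ffunE /= => /eqP->.
by exists a; rewrite ffunE /= eqxx.
Qed.

Lemma lw_mul1r (u : lword Q) : lw_mul u (@lw_one Q) = u.
Proof.
apply/ffunP=> [[a b]]; rewrite lw_mulE.
apply/fintype.existsP/idP=> [[c /andP[uac]]|uab]; first by rewrite ffunE /= => /eqP<-.
by exists b; rewrite ffunE /= eqxx andbT.
Qed.

Lemma lw_mul_sharp (v : lword Q) : lw_idem v -> lw_mul v (lw_sharp v) = lw_sharp v.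
Proof.
move=> /eqP vv; apply/ffunP=> [[a b]]; rewrite lw_mulE ffunE /= -{3}vv lw_mulE.
apply/fintype.existsP/andP=> [[c /andP[vac]]|[/fintype.existsP[c /andP[vac vcb]] rb]].
  by rewrite ffunE /= => /andP[vcb rb]; split=> //; apply/fintype.existsP; exists c; rewrite vac.
by exists c; rewrite vac ffunE /= vcb.
Qed.

End LimitWordAlgebra.

Section TransientFactorization.
Variables (R : realType) (Q A : finType) (Delta : Q -> A -> Q -> R).

Lemma markov_monoid_ext (u up : lword Q) :
  ext_markov_monoid Delta u up -> markov_monoid Delta u.
Proof. by elim=> *; constructor. Qed.

Definition transient_factorization (u : lword Q) (a : Q) : Prop :=
  exists x v y t,
    [/\ [/\ markov_monoid Delta x, markov_monoid Delta v & markov_monoid Delta y],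
        lw_idem v, u = lw_mul (lw_mul x (lw_sharp v)) y,
        lw_mul x v (a, t) & ~~ lw_recurrent v t].

Lemma transient_factorization_sharp (u : lword Q) a b :
  markov_monoid Delta u -> lw_idem u -> u (a, b) -> ~~ lw_recurrent u b ->
  transient_factorization (lw_sharp u) a.
Proof.
move=> Mu idu uab ub; exists (@lw_one Q), u, (@lw_one Q), b.
by split=> //; [split=> //; constructor|rewrite lw_mul1l lw_mul1r|rewrite lw_mul1l].
Qed.

Lemma transient_factorization_mulr (u w : lword Q) a :
  markov_monoid Delta w -> transient_factorization u a ->
  transient_factorization (lw_mul u w) a.
Proof.
move=> Mw [x [v [y [t [[Mx Mv My] idv -> xvat vt]]]]].
exists x, v, (lw_mul y w), t; split=> //; last by rewrite !lw_mulA.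
by split=> //; apply: mm_mul.
Qed.

Lemma transient_factorization_mull (w u : lword Q) a c :
  markov_monoid Delta w -> w (a, c) -> transient_factorization u c ->
  transient_factorization (lw_mul w u) a.
Proof.
move=> Mw wac [x [v [y [t [[Mx Mv My] idv -> xvct vt]]]]].
exists (lw_mul w x), v, y, t; split=> //; first by split=> //; apply: mm_mul.
  by rewrite !lw_mulA.
by rewrite lw_mulA lw_mulE; apply/fintype.existsP; exists c; rewrite wac.
Qed.

Lemma ext_markov_monoid_gap (u up : lword Q) a b :
  ext_markov_monoid Delta u up -> up (a, b) -> ~~ u (a, b) ->
  transient_factorization u a.
Proof.
move=> Euup; elim: Euup a b => {u up}.
- by move=> ? a b ->.
- by move=> a b ->.
- move=> u up v vp Euup IHu Evvp IHv a b.
  rewrite !lw_mulE => /fintype.existsP[c /andP[upac vpcb]] nuvab.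
  have [uac|nuac] := boolP (u (a, c)).
  + have nvcb : ~~ v (c, b).
      by apply: contra nuvab => vcb; apply/fintype.existsP; exists c; rewrite uac.
    exact: transient_factorization_mull (markov_monoid_ext Euup) uac (IHv c b vpcb nvcb).
  + exact: transient_factorization_mulr (markov_monoid_ext Evvp) (IHu a c upac nuac).
- move=> u up Euup IHu idu idup a b upab; rewrite ffunE /= negb_and.
  have [uab /= ub|nuab _] := boolP (u (a, b)).
    exact: transient_factorization_sharp (markov_monoid_ext Euup) idu uab ub.
  (* u^# = u u^#, so the factorization of u extends to u^#. *)
  have Mus : markov_monoid Delta (lw_sharp u) by apply: mm_sharp (markov_monoid_ext Euup) _.
  have [x [v [y [t [Ms idv us_def xvat vt]]]]] :=
    transient_factorization_mulr Mus (IHu a b upab nuab).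
  exists x, v, y, t; split=> //.
  by rewrite -[lw_sharp u](lw_mul_sharp idu) -us_def.
Qed.

End TransientFactorization.

Theorem proposition5p14 (R : realType) (Q A : finType) (q0 : Q) (F : {set Q})
  (Delta : Q -> A -> Q -> R) :
  is_transition Delta ->
  (exists u up : lword Q, ext_markov_monoid Delta u up /\ leak_witness u up) ->
  exists u v w : lword Q,
    [/\ markov_monoid Delta u, markov_monoid Delta v, markov_monoid Delta w
      & non_simplicity_witness u v w].
Proof.
move=> _ [u [up [Euup [idu [_ [r [q [rr _ nurq uprq]]]]]]]].
have [x [v [y [t [[Mx Mv My] idv u_def xvrt vt]]]]] :=
  ext_markov_monoid_gap Euup uprq (negbT nurq).
exists x, v, y; split=> //; split=> //.
by exists r, t; split; rewrite -?u_def.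
Qed.
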